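(* If $\lambda<1-\frac1d$, then the unique fixed point $x^\star$ is given by $x^\star_{0,0}=1-\lambda-\frac1d$, $x^\star_{0,1}=\frac1d$, $x^\star_{1,1}=\lambda$ and $x^\star_{i,j}=0$ for all other $(i,j)$; in particular $x^\star_{0,0}>0$.
   Context: Fix $\lambda\in(0,1)$, an integer $d\ge2$ and an integer $I>1$. $\mathcal S=\{x=(x_{i,j})_{0\le i\le j\le I}: x_{i,j}\ge0,\ \sum_{i=0}^I\sum_{j=i}^I x_{i,j}=1\}$; $x_{i,\cdot}=\sum_{j=i}^I x_{i,j}$, $x_{\cdot,j}=\sum_{i=0}^j x_{i,j}$. For $0\le j\le I$: $\mathcal R_j(x)=\max\{0,\lambda(1-d\sum_{i=0}^j(j+1-i)x_{i,\cdot})\}\,\mathbf 1\{\sum_{i=0}^j x_{\cdot,i}=0\}$, $\mathcal G_j(x)=\lambda d\,\mathbf 1\{\sum_{i=0}^j x_{\cdot,i}=0,\ d\sum_{i=0}^j(j+1-i)x_{i,\cdot}\le1\}\sum_{i=0}^j x_{i,\cdot}$. Write $\rho_k^{a,b}(x)=\mathcal R_k(x)\frac{x_{a,b}}{x_{\cdot,b}}\mathbf 1\{x_{\cdot,b}>0\}$ (equal to $0$ when $x_{\cdot,b}=0$). The drift $b(x)$ is: $b_{0,0}=\lambda d(x_{0,\cdot}-x_{0,0})-\lambda+\mathcal R_0(x)$; for $i<j$: $b_{i,j}=x_{i+1,j}-\mathbf 1\{i>0\}x_{i,j}-\lambda d x_{i,j}-\rho_{j-1}^{i,j}+\mathbf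 1\{i>0\}\rho_{j-2}^{i-1,j-1}+\mathbf 1\{j=I,i>0\}\rho_{I-1}^{i-1,I}$; $b_{1,1}=-x_{1,1}+\lambda d(x_{1,\cdot}-x_{1,1})+\lambda-\mathcal R_0(x)-\rho_0^{1,1}-\mathcal G_1(x)$; for $2\le i\le I-1$: $b_{i,i}=-x_{i,i}+\lambda d(x_{i,\cdot}-x_{i,i})-\rho_{i-1}^{i,i}+\rho_{i-2}^{i-1,i-1}+\mathcal G_{i-1}(x)-\mathcal G_i(x)$; $b_{I,I}=-x_{I,I}+\rho_{I-2}^{I-1,I-1}+\mathcal G_{I-1}(x)+\rho_{I-1}^{I-1,I}$. A fluid solution is an absolutely continuous $x:\mathbb R_+\to\mathcal S$ with $\dot x_{i,j}(t)=b_{i,j}(x(t))$ for a.e. $t$ and all $i\le j$. A fixed point is a fluid solution with $b(x(t))=0$ for all $t\ge0$ (hence constant, identified with a point of $\mathcal S$); it is unique. *)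

From Stdlib Require Import Reals Lra Lia.
Open Scope R_scope.

(* A configuration x = (x_{i,j})_{0<=i<=j<=I} is represented as a function
   nat -> nat -> R; only the entries with i <= j <= I are meaningful. *)
Definition config := nat -> nat -> R.

Fixpoint sumN (n : nat) (f : nat -> R) : R :=
  match n with
  | O => 0
  | S m => sumN m f + f m
  end.

Definition ind (b : bool) : R := if b then 1 else 0.

Definition inS (I : nat) (x : config) : Prop :=
  (forall i j, (i <= j <= I)%nat -> 0 <= x i j) /\
  sumN (S I) (fun i => sumN (S I) (fun j => if Nat.leb i j then x i j else 0)) = 1.

Definition row (I : nat) (x : config) (i : nat) : R :=
  sumN (S I) (fun j => if Nat.leb i j then x i j else 0).

Definition col (x : config) (j : nat) : R := sumN (S j) (fun i => x i j).

Definition wsum (I : nat) (x : config) (j : nat) : R :=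
  sumN (S j) (fun i => INR (S j - i) * row I x i).

Definition colsum (x : config) (j : nat) : R := sumN (S j) (fun i => col x i).

Definition Rj (lam : R) (d I : nat) (x : config) (j : nat) : R :=
  Rmax 0 (lam * (1 - INR d * wsum I x j)) *
  (if Req_EM_T (colsum x j) 0 then 1 else 0).

Definition Gj (lam : R) (d I : nat) (x : config) (j : nat) : R :=
  lam * INR d *
  (if Req_EM_T (colsum x j) 0 then
     (if Rle_dec (INR d * wsum I x j) 1 then 1 else 0) else 0) *
  sumN (S j) (fun i => row I x i).

Definition rho (lam : R) (d I : nat) (x : config) (k a b : nat) : R :=
  if Req_EM_T (col x b) 0 then 0 else Rj lam d I x k * x a b / col x b.

Definition drift (lam : R) (d I : nat) (x : config) (i j : nat) : R :=
  let dd := INR d in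
  if andb (Nat.eqb i 0) (Nat.eqb j 0) then
    lam * dd * (row I x 0 - x 0%nat 0%nat) - lam + Rj lam d I x 0
  else if Nat.ltb i j then
    x (S i) j - ind (Nat.ltb 0 i) * x i j - lam * dd * x i j
    - rho lam d I x (j - 1) i j
    + ind (Nat.ltb 0 i) * rho lam d I x (j - 2) (i - 1) (j - 1)
    + ind (andb (Nat.eqb j I) (Nat.ltb 0 i)) * rho lam d I x (I - 1) (i - 1) I
  else if Nat.eqb i 1 then
    - x 1%nat 1%nat + lam * dd * (row I x 1 - x 1%nat 1%nat) + lam
    - Rj lam d I x 0 - rho lam d I x 0 1 1 - Gj lam d I x 1
  else if Nat.eqb i I then
    - x I I + rho lam d I x (I - 2) (I - 1) (I - 1) + Gj lam d I x (I - 1)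
    + rho lam d I x (I - 1) (I - 1) I
  else
    - x i i + lam * dd * (row I x i - x i i) - rho lam d I x (i - 1) i i
    + rho lam d I x (i - 2) (i - 1) (i - 1) + Gj lam d I x (i - 1) - Gj lam d I x i.

(* A fixed point: a point of S at which the drift vanishes (identified with
   the constant fluid solution). *)
Definition is_fixed_point (lam : R) (d I : nat) (x : config) : Prop :=
  inS I x /\ forall i j, (i <= j <= I)%nat -> drift lam d I x i j = 0.

Definition xstar (lam : R) (d : nat) : config :=
  fun i j =>
    match i, j with
    | 0%nat, 0%nat => 1 - lam - 1 / INR d
    | 0%nat, 1%nat => 1 / INR d
    | 1%nat, 1%nat => lam
    | _, _ => 0
    end.

(* The rho-terms move mass from row i to row i+1 (and from column j to j+1),
   the G-terms from diagonal entry j to j+1, and lambda - R_0 feeds row 1.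
   Summing the drift over a row, at a fixed point the mass of row k+1 equals
   the flux it receives from row k.  The rho-flux through column j+1 is at most
   R_j, and G_{j+1} at most what R_{j+1} leaves of R_j, so these fluxes
   telescope to at most R_0 and rows 1..I carry mass at most lambda.  Row 0
   thus has mass at least 1 - lambda > 1/d, and if x_{0,0} were 0 the drift
   b_{0,0} = lambda (d x_{0,.} - 1) would be positive.  Hence x_{0,0} > 0,
   which switches off every R_j, G_j and rho-term; the remaining drift is
   linear and triangular, and solving it column by column from the last one
   gives x^*. *)

From Pilot Require Import Defs.
From Stdlib Require Import Reals Lra Lia.
Open Scope R_scope.
Open Scope bool_scope.

Lemma sumN_ext n f g : (forall i, (i < n)%nat -> f i = g i) -> sumN n f = sumN n g.
Proof.
  induction n as [|n IH]; intros H; simpl; [reflexivity|].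
  rewrite IH by (intros; apply H; lia).
  rewrite H by lia; reflexivity.
Qed.

Lemma sumN_add n f g : sumN n (fun i => f i + g i) = sumN n f + sumN n g.
Proof. induction n; simpl; [lra|]. rewrite IHn; ring. Qed.

Lemma sumN_sub n f g : sumN n (fun i => f i - g i) = sumN n f - sumN n g.
Proof. induction n; simpl; [lra|]. rewrite IHn; ring. Qed.

Lemma sumN_scal n c f : sumN n (fun i => c * f i) = c * sumN n f.
Proof. induction n; simpl; [lra|]. rewrite IHn; ring. Qed.

Lemma sumN_eq0 n f : (forall i, (i < n)%nat -> f i = 0) -> sumN n f = 0.
Proof.
  intros H; rewrite (sumN_ext n f (fun _ => 0)) by exact H.
  induction n; simpl; [|rewrite IHn by (intros; apply H; lia)]; lra.
Qed.

Lemma sumN_nonneg n f : (forall i, (i < n)%nat -> 0 <= f i) -> 0 <= sumN n f.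
Proof.
  induction n as [|n IH]; intros H; simpl; [lra|].
  assert (0 <= sumN n f) by (apply IH; intros; apply H; lia).
  assert (0 <= f n) by (apply H; lia).
  lra.
Qed.

Lemma sumN_shift n f : sumN (S n) f = f 0%nat + sumN n (fun i => f (S i)).
Proof. induction n; simpl in *; [|rewrite IHn]; ring. Qed.

Lemma sumN_single n f k :
  (k < n)%nat -> (forall j, (j < n)%nat -> j <> k -> f j = 0) -> sumN n f = f k.
Proof.
  induction n as [|n IH]; intros Hk H; [lia|]; simpl.
  destruct (Nat.eq_dec k n) as [->|Hkn].
  - rewrite sumN_eq0 by (intros; apply H; lia); ring.
  - rewrite IH, (H n) by (try lia; intros; apply H; lia); ring.
Qed.

Lemma sumN_first_two n f :
  (2 <= n)%nat -> (forall j, (2 <= j < n)%nat -> f j = 0) -> sumN n f = f 0%nat + f 1%nat.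
Proof.
  intros Hn H; rewrite (sumN_ext n f (fun j => if (j <? 2)%nat then f j else 0)).
  - do 2 (destruct n as [|n]; [lia|]).
    rewrite !sumN_shift, sumN_eq0 by reflexivity; simpl; ring.
  - intros j Hj; destruct (Nat.ltb_spec j 2); [reflexivity|apply H; lia].
Qed.

Lemma sumN_delta n k c : (k < n)%nat -> sumN n (fun j => if (j =? k)%nat then c else 0) = c.
Proof.
  intros Hk; rewrite (sumN_single _ _ k Hk), Nat.eqb_refl; [reflexivity|].
  intros j _ Hj; rewrite (proj2 (Nat.eqb_neq j k) Hj); reflexivity.
Qed.

Lemma sumN_trunc n j f :
  sumN n (fun i => if (i <=? j)%nat then f i else 0) = sumN (Nat.min n (S j)) f.
Proof.
  induction n as [|n IH]; [reflexivity|]; simpl sumN at 1; rewrite IH.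
  destruct (Nat.leb_spec n j).
  - replace (Nat.min (S n) (S j)) with (S n) by lia.
    replace (Nat.min n (S j)) with n by lia; reflexivity.
  - replace (Nat.min (S n) (S j)) with (S j) by lia.
    replace (Nat.min n (S j)) with (S j) by lia; ring.
Qed.

Lemma sumN_swap n m f :
  sumN n (fun i => sumN m (fun j => f i j)) = sumN m (fun j => sumN n (fun i => f i j)).
Proof.
  induction n as [|n IH]; simpl.
  - symmetry; apply sumN_eq0; reflexivity.
  - rewrite IH, <- sumN_add; reflexivity.
Qed.

Ltac decide_nat_tests :=
  repeat match goal with
  | |- context [Nat.leb ?a ?b] =>
      first [rewrite (proj2 (Nat.leb_le a b)) by lia | rewrite (proj2 (Nat.leb_gt a b)) by lia]
  | |- context [Nat.ltb ?a ?b] =>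
      first [rewrite (proj2 (Nat.ltb_lt a b)) by lia | rewrite (proj2 (Nat.ltb_ge a b)) by lia]
  | |- context [Nat.eqb ?a ?b] =>
      first [rewrite (proj2 (Nat.eqb_eq a b)) by lia | rewrite (proj2 (Nat.eqb_neq a b)) by lia]
  end; rewrite ?Bool.andb_false_r, ?Bool.andb_true_r; cbn [andb]; unfold Defs.ind.

Ltac sumN_linear :=
  repeat first [rewrite sumN_add | rewrite sumN_sub | rewrite sumN_scal].

Definition nonneg (I : nat) (x : config) : Prop :=
  forall i j, (i <= j <= I)%nat -> 0 <= x i j.

Definition colsum_vanishes (x : config) (j : nat) : R :=
  if Req_EM_T (colsum x j) 0 then 1 else 0.

Section MassBalance.

Variables (lam : R) (d I : nat) (x : config).

Local Notation R_ := (Rj lam d I x).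
Local Notation G_ := (Gj lam d I x).
Local Notation rho_ := (rho lam d I x).

(* rho_out i: flux from row i to row i+1; rho_in j: the part of R_{j-1} spent on column j *)
Definition rho_out (i : nat) : R :=
  sumN (S I) (fun j => if ((i <=? j) && (0 <? j))%nat then rho_ (j - 1) i j else 0).

Definition rho_in (j : nat) : R := sumN (S j) (fun i => rho_ (j - 1) i j).

Definition source (k : nat) : R := if (k =? 0)%nat then lam - R_ 0 else G_ k.

Definition row_drift (i : nat) : R :=
  sumN (S I) (fun j => if (i <=? j)%nat then drift lam d I x i j else 0).

Definition row_excess (k : nat) : R := row I x (S k) - (rho_out k + source k).

Lemma row_drift_0 : row_drift 0 = row_excess 0.
Proof.
  unfold row_drift, row_excess, source; simpl Nat.eqb; cbv iota.
  rewrite (sumN_ext _ _ (fun j =>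
      ((if (1 <=? j)%nat then x 1%nat j else 0)
       + lam * INR d * ((if (j =? 0)%nat then row I x 0 else 0)
                        - (if (0 <=? j)%nat then x 0%nat j else 0))
       - (if ((0 <=? j) && (0 <? j))%nat then rho_ (j - 1) 0 j else 0))
      + (if (j =? 0)%nat then R_ 0 - lam else 0))).
  - sumN_linear; rewrite !sumN_delta by lia.
    unfold row, rho_out; ring.
  - intros [|j] _; unfold drift; decide_nat_tests; ring.
Qed.

Lemma rho_out_pred i : (1 <= i <= I)%nat ->
  sumN (S I) (fun j => if (i <=? j)%nat then
                          (if (0 <? j - 1)%nat then rho_ (j - 2) (i - 1) (j - 1) else 0)
                        else 0)
  + rho_ (I - 1) (i - 1) I = rho_out (i - 1).
Proof.
  intros Hi; unfold rho_out; rewrite sumN_shift; simpl sumN at 2.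
  decide_nat_tests; rewrite Rplus_0_l; f_equal; apply sumN_ext; intros j Hj.
  replace (S j - 1)%nat with j by lia; replace (S j - 2)%nat with (j - 1)%nat by lia.
  destruct (Nat.leb_spec (i - 1) j), (Nat.ltb_spec 0 j); decide_nat_tests; reflexivity.
Qed.

Lemma row_drift_succ k : (S k < I)%nat -> row_drift (S k) = row_excess (S k) - row_excess k.
Proof.
  intros Hk; unfold row_drift, row_excess.
  set (i := S k).
  rewrite (sumN_ext _ _ (fun j =>
      ((((if (S i <=? j)%nat then x (S i) j else 0) - (if (i <=? j)%nat then x i j else 0))
        + lam * INR d * ((if (j =? i)%nat then row I x i else 0)
                         - (if (i <=? j)%nat then x i j else 0)))
       - (if ((i <=? j) && (0 <? j))%nat then rho_ (j - 1) i j else 0))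
      + ((if (i <=? j)%nat then
            (if (0 <? j - 1)%nat then rho_ (j - 2) (i - 1) (j - 1) else 0) else 0)
         + (if (j =? I)%nat then rho_ (I - 1) (i - 1) I else 0))
      + (if (j =? i)%nat then source k - G_ i else 0))).
  - sumN_linear; rewrite !sumN_delta by lia.
    rewrite (rho_out_pred i) by (unfold i; lia).
    replace (i - 1)%nat with k by (unfold i; lia); unfold row, rho_out, source, i.
    destruct k; simpl; ring.
  - intros j Hj; unfold source, i.
    destruct (Nat.lt_total j (S k)) as [Hlt|[->|Hgt]].
    + decide_nat_tests; ring.
    + destruct k; unfold drift; decide_nat_tests; simpl Nat.sub; ring.
    + destruct (Nat.eqb_spec j I) as [->|HjI]; unfold drift; decide_nat_tests; ring.
Qed.

Lemma sum_rho_out : sumN (S I) rho_out = sumN I (fun j => rho_in (S j)).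
Proof.
  unfold rho_out, rho_in; rewrite sumN_swap, sumN_shift, sumN_eq0, Rplus_0_l
    by (intros; rewrite Bool.andb_false_r; reflexivity).
  apply sumN_ext; intros j Hj.
  rewrite (sumN_ext _ _ (fun i => if (i <=? S j)%nat then rho_ (S j - 1) i (S j) else 0))
    by (intros; rewrite Bool.andb_true_r; reflexivity).
  rewrite sumN_trunc; f_equal; lia.
Qed.

Hypothesis x_nonneg : nonneg I x.

Lemma col_nonneg j : (j <= I)%nat -> 0 <= col x j.
Proof. intros Hj; apply sumN_nonneg; intros; apply x_nonneg; lia. Qed.

Lemma colsum_nonneg j : (j <= I)%nat -> 0 <= colsum x j.
Proof. intros Hj; apply sumN_nonneg; intros; apply col_nonneg; lia. Qed.

Lemma row_nonneg i : 0 <= row I x i.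
Proof.
  apply sumN_nonneg; intros j Hj; destruct (Nat.leb_spec i j); [apply x_nonneg; lia|lra].
Qed.

Lemma Rj_nonneg k : 0 <= R_ k.
Proof. apply Rmult_le_pos; [apply Rmax_l|destruct Req_EM_T; lra]. Qed.

Lemma rho_nonneg k a b : (a <= b <= I)%nat -> 0 <= rho_ k a b.
Proof.
  intros Hab; unfold rho; destruct Req_EM_T as [|Hc]; [lra|].
  pose proof (col_nonneg b ltac:(lia)).
  apply Rmult_le_pos; [apply Rmult_le_pos; [apply Rj_nonneg|apply x_nonneg; lia]|].
  left; apply Rinv_0_lt_compat; lra.
Qed.

Lemma rho_out_nonneg i : 0 <= rho_out i.
Proof.
  apply sumN_nonneg; intros j Hj.
  destruct (Nat.leb_spec i j), (Nat.ltb_spec 0 j); cbn [andb]; try lra.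
  apply rho_nonneg; lia.
Qed.

(* the fractions x_{a,b} / x_{.,b} sum to one over column b *)
Lemma rho_in_le j : (j < I)%nat -> rho_in (S j) <= R_ j * (1 - colsum_vanishes x (S j)).
Proof.
  intros Hj; unfold rho_in, colsum_vanishes, rho; replace (S j - 1)%nat with j by lia.
  pose proof (Rj_nonneg j); pose proof (colsum_nonneg j ltac:(lia)).
  destruct (Req_EM_T (col x (S j)) 0) as [Hc|Hc].
  - rewrite sumN_eq0 by reflexivity; destruct Req_EM_T; lra.
  - pose proof (col_nonneg (S j) ltac:(lia)).
    change (colsum x (S j)) with (colsum x j + col x (S j)).
    destruct Req_EM_T; [lra|].
    rewrite (sumN_ext _ _ (fun i => R_ j / col x (S j) * x i (S j)))
      by (intros; unfold Rdiv; ring).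
    rewrite sumN_scal; fold (col x (S j)); field_simplify; lra.
Qed.

Lemma wsum_succ k : wsum I x (S k) = wsum I x k + sumN (S (S k)) (row I x).
Proof.
  unfold wsum; change (sumN (S (S k)) ?f) with (sumN (S k) f + f (S k)); cbv beta.
  replace (S (S k) - S k)%nat with 1%nat by lia.
  rewrite (sumN_ext (S k) _ (fun i => INR (S k - i) * row I x i + row I x i)), sumN_add.
  - change (sumN (S k) (fun i => row I x i)) with (sumN (S k) (row I x)); simpl INR; ring.
  - intros i Hi; replace (S (S k) - i)%nat with (S (S k - i)) by lia; rewrite S_INR; ring.
Qed.

Hypothesis lam_pos : 0 < lam.

(* G_{m+1} is the part of R_m that R_{m+1} no longer absorbs *)
Lemma Gj_succ_le m : (m < I)%nat -> G_ (S m) <= R_ m * colsum_vanishes x (S m) - R_ (S m).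
Proof.
  intros Hm.
  pose proof (col_nonneg (S m) ltac:(lia)); pose proof (colsum_nonneg m ltac:(lia)).
  assert (Hrows : 0 <= sumN (S (S m)) (row I x)) by (apply sumN_nonneg; intros; apply row_nonneg).
  assert (Hw : 0 <= wsum I x m)
    by (apply sumN_nonneg; intros; apply Rmult_le_pos; [apply pos_INR|apply row_nonneg]).
  pose proof (pos_INR d); pose proof (wsum_succ m) as Hws.
  pose proof (Rmax_l 0 (lam * (1 - INR d * wsum I x m))).
  unfold Gj, Rj, colsum_vanishes; change (colsum x (S m)) with (colsum x m + col x (S m)).
  destruct (Req_EM_T (colsum x m + col x (S m)) 0) as [Hc|Hc]; [|nra].
  destruct (Req_EM_T (colsum x m) 0) as [_|]; [|lra].
  destruct (Rle_dec (INR d * wsum I x (S m)) 1) as [Hle|Hgt].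
  - rewrite !Rmax_right by (apply Rmult_le_pos; nra).
    change (fun i => row I x i) with (row I x); rewrite Hws; lra.
  - rewrite (Rmax_left 0 (lam * (1 - INR d * wsum I x (S m)))) by nra; nra.
Qed.

Lemma flows_le_R0 n : (n < I)%nat ->
  sumN (S n) (fun j => rho_in (S j)) + sumN n (fun k => G_ (S k))
  + R_ n * colsum_vanishes x (S n) <= R_ 0.
Proof.
  induction n as [|n IH]; intros Hn.
  - pose proof (rho_in_le 0 Hn); simpl; lra.
  - pose proof (rho_in_le (S n) Hn); pose proof (Gj_succ_le n ltac:(lia)).
    specialize (IH ltac:(lia)); simpl sumN in *; lra.
Qed.

Lemma colsum_ge_x00 k : (k <= I)%nat -> x 0%nat 0%nat <= colsum x k.
Proof.
  intros Hk; unfold colsum; rewrite sumN_shift.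
  assert (0 <= sumN k (fun i => col x (S i))) by (apply sumN_nonneg; intros; apply col_nonneg; lia).
  unfold col at 1; simpl; lra.
Qed.

End MassBalance.

Section BoundaryTerms.

Variables (lam : R) (d I : nat) (x : config).

Hypothesis x_nonneg : nonneg I x.
Hypothesis x00_pos : 0 < x 0%nat 0%nat.

Lemma Rj_eq0 k : (k <= I)%nat -> Rj lam d I x k = 0.
Proof.
  intros Hk; pose proof (colsum_ge_x00 I x x_nonneg k Hk).
  unfold Rj; destruct Req_EM_T; [lra|ring].
Qed.

Lemma Gj_eq0 k : (k <= I)%nat -> Gj lam d I x k = 0.
Proof.
  intros Hk; pose proof (colsum_ge_x00 I x x_nonneg k Hk).
  unfold Gj; destruct Req_EM_T; [lra|ring].
Qed.

Lemma rho_eq0 k a b : (k <= I)%nat -> rho lam d I x k a b = 0.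
Proof.
  intros Hk; unfold rho; destruct Req_EM_T; [reflexivity|].
  rewrite Rj_eq0 by exact Hk; unfold Rdiv; ring.
Qed.

Definition linear_drift (i j : nat) : R :=
  if (i =? 0)%nat && (j =? 0)%nat then lam * INR d * (row I x 0 - x 0%nat 0%nat) - lam
  else if (i <? j)%nat then x (S i) j - Defs.ind (0 <? i)%nat * x i j - lam * INR d * x i j
  else if (i =? 1)%nat then - x 1%nat 1%nat + lam * INR d * (row I x 1 - x 1%nat 1%nat) + lam
  else if (i =? I)%nat then - x I I
  else - x i i + lam * INR d * (row I x i - x i i).

(* with x_{0,0} > 0 no column prefix is empty, so R, G and rho all vanish *)
Lemma drift_linear i j : (i <= j <= I)%nat -> drift lam d I x i j = linear_drift i j.
Proof.
  intros Hij; unfold drift, linear_drift.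
  rewrite !rho_eq0, ?Gj_eq0, ?Rj_eq0 by lia.
  destruct ((i =? 0)%nat && (j =? 0)%nat); [ring|].
  destruct (i <? j)%nat; [ring|].
  destruct (Nat.eqb_spec i 1) as [->|]; [rewrite !Gj_eq0 by lia; ring|].
  destruct (Nat.eqb_spec i I); rewrite ?Gj_eq0 by lia; ring.
Qed.

End BoundaryTerms.

Section FixedPoint.

Variables (lam : R) (d I : nat) (x : config).

Hypothesis fixed : is_fixed_point lam d I x.
Hypothesis lam_pos : 0 < lam.
Hypothesis I_gt1 : (1 < I)%nat.

Let x_nonneg : nonneg I x := proj1 (proj1 fixed).

Lemma row_drift_eq0 i : row_drift lam d I x i = 0.
Proof.
  apply sumN_eq0; intros j Hj.
  destruct (Nat.leb_spec i j); [apply (proj2 fixed); lia|reflexivity].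
Qed.

Lemma row_excess_eq0 k : (k < I)%nat -> row_excess lam d I x k = 0.
Proof.
  induction k as [|k IH]; intros Hk.
  - rewrite <- row_drift_0; apply row_drift_eq0.
  - pose proof (row_drift_succ lam d I x k Hk) as E.
    rewrite row_drift_eq0, IH in E by lia; lra.
Qed.

Lemma upper_rows_le : sumN I (fun i => row I x (S i)) <= lam.
Proof.
  rewrite (sumN_ext _ _ (fun k => rho_out lam d I x k + source lam d I x k))
    by (intros k Hk; pose proof (row_excess_eq0 k Hk); unfold row_excess in *; lra).
  assert (Hsource : sumN I (source lam d I x)
                    = lam - Rj lam d I x 0 + sumN (I - 1) (fun k => Gj lam d I x (S k))).
  { replace (sumN I _) with (sumN (S (I - 1)) (source lam d I x)) by (f_equal; lia).
    rewrite sumN_shift; reflexivity. }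
  rewrite sumN_add, Hsource.
  pose proof (sum_rho_out lam d I x) as Hout; simpl sumN in Hout.
  pose proof (rho_out_nonneg lam d I x x_nonneg I).
  pose proof (flows_le_R0 lam d I x x_nonneg lam_pos (I - 1) ltac:(lia)) as Hflows.
  replace (S (I - 1)) with I in Hflows by lia.
  pose proof (Rj_nonneg lam d I x (I - 1)).
  assert (0 <= colsum_vanishes x I) by (unfold colsum_vanishes; destruct Req_EM_T; lra).
  assert (0 <= Rj lam d I x (I - 1) * colsum_vanishes x I) by (apply Rmult_le_pos; lra).
  lra.
Qed.

Hypothesis d_pos : (0 < d)%nat.
Hypothesis lam_lt : lam < 1 - 1 / INR d.

Lemma x00_pos : 0 < x 0%nat 0%nat.
Proof.
  destruct (x_nonneg 0%nat 0%nat ltac:(lia)) as [|Hx00]; [assumption|exfalso].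
  assert (Hd : 0 < INR d) by (apply lt_0_INR; lia).
  assert (Hrow0 : 1 < INR d * row I x 0).
  { pose proof (proj2 (proj1 fixed)) as Hmass; change (sumN (S I) (row I x) = 1) in Hmass.
    rewrite sumN_shift in Hmass; pose proof upper_rows_le.
    assert (1 / INR d * INR d = 1) by (field; lra).
    nra. }
  assert (HR0 : Rj lam d I x 0 = 0).
  { unfold Rj; replace (wsum I x 0) with (row I x 0) by (unfold wsum; simpl; ring).
    replace (colsum x 0) with 0 by (unfold colsum, col; simpl; lra).
    rewrite Rmax_left by nra; ring. }
  pose proof (proj2 fixed 0%nat 0%nat ltac:(lia)) as E.
  unfold drift in E; cbn [andb Nat.eqb] in E; rewrite HR0, <- Hx00 in E; nra.
Qed.

Lemma linear_drift_eq0 i j : (i <= j <= I)%nat -> linear_drift lam d I x i j = 0.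
Proof.
  intros Hij; rewrite <- (drift_linear lam d I x x_nonneg x00_pos) by exact Hij.
  exact (proj2 fixed i j Hij).
Qed.

Lemma offdiag_recurrence i j :
  (i < j <= I)%nat -> x (S i) j = (Defs.ind (0 <? i)%nat + lam * INR d) * x i j.
Proof.
  intros Hij; generalize (linear_drift_eq0 i j ltac:(lia)).
  unfold linear_drift; decide_nat_tests; lra.
Qed.

Lemma column_eq0_of_diag_eq0 j :
  (j <= I)%nat -> x j j = 0 -> forall i, (i <= j)%nat -> x i j = 0.
Proof.
  intros Hj Hjj i Hi; remember (j - i)%nat as n eqn:Hn; revert i Hi Hn.
  induction n as [|n IH]; intros i Hi Hn; [replace i with j by lia; exact Hjj|].
  pose proof (offdiag_recurrence i j ltac:(lia)) as E; rewrite (IH (S i)) in E by lia.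
  assert (0 < lam * INR d) by (apply Rmult_lt_0_compat; [lra|apply lt_0_INR; lia]).
  assert (0 <= Defs.ind (0 <? i)%nat) by (unfold Defs.ind; destruct (0 <? i)%nat; lra).
  nra.
Qed.

Lemma row_eq_diag j : (j <= I)%nat ->
  (forall k i, (j < k <= I)%nat -> (i <= k)%nat -> x i k = 0) -> row I x j = x j j.
Proof.
  intros Hj Hupper; unfold row; rewrite (sumN_single _ _ j).
  - decide_nat_tests; reflexivity.
  - lia.
  - intros k Hk Hkj; destruct (Nat.leb_spec j k); [apply Hupper; lia|reflexivity].
Qed.

Lemma diag_eq0_of_upper j : (2 <= j <= I)%nat ->
  (forall k i, (j < k <= I)%nat -> (i <= k)%nat -> x i k = 0) -> x j j = 0.
Proof.
  intros Hj Hupper; generalize (linear_drift_eq0 j j ltac:(lia)).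
  unfold linear_drift; decide_nat_tests.
  rewrite (row_eq_diag j) by (exact Hupper || lia).
  destruct (Nat.eqb_spec j I) as [->|]; lra.
Qed.

Lemma upper_columns_eq0 i j : (2 <= j <= I)%nat -> (i <= j)%nat -> x i j = 0.
Proof.
  assert (H : forall n j, (2 <= j <= I)%nat -> (I - j <= n)%nat ->
                forall i, (i <= j)%nat -> x i j = 0).
  { induction n as [|n IH]; intros j' Hj' Hn;
      apply column_eq0_of_diag_eq0; try lia; apply diag_eq0_of_upper; try lia.
    intros k i' Hk Hi'; apply IH; lia. }
  intros Hj Hi; apply (H (I - j)%nat); lia.
Qed.

Lemma x11_eq : x 1%nat 1%nat = lam.
Proof.
  generalize (linear_drift_eq0 1 1 ltac:(lia)).
  unfold linear_drift; decide_nat_tests.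
  rewrite (row_eq_diag 1) by (try lia; intros; apply upper_columns_eq0; lia); lra.
Qed.

Lemma x01_eq : x 0%nat 1%nat = 1 / INR d.
Proof.
  pose proof (offdiag_recurrence 0 1 ltac:(lia)) as E; rewrite x11_eq in E.
  unfold Defs.ind in E; simpl in E.
  assert (0 < INR d) by (apply lt_0_INR; lia).
  apply (Rmult_eq_reg_l (lam * INR d)); [|nra].
  field_simplify; lra.
Qed.

Lemma x00_eq : x 0%nat 0%nat = 1 - lam - 1 / INR d.
Proof.
  pose proof (proj2 (proj1 fixed)) as Hmass; change (sumN (S I) (row I x) = 1) in Hmass.
  rewrite sumN_first_two in Hmass; try lia.
  - unfold row in Hmass; rewrite !sumN_first_two in Hmass; try lia.
    + simpl in Hmass; rewrite x01_eq, x11_eq in Hmass; lra.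
    + intros j Hj; decide_nat_tests; apply upper_columns_eq0; lia.
    + intros j Hj; decide_nat_tests; apply upper_columns_eq0; lia.
  - intros i Hi; apply sumN_eq0; intros j Hj.
    destruct (Nat.leb_spec i j); [apply upper_columns_eq0; lia|reflexivity].
Qed.

Lemma fixed_point_eq_xstar i j : (i <= j <= I)%nat -> x i j = xstar lam d i j.
Proof.
  intros Hij; destruct j as [|[|j]].
  - replace i with 0%nat by lia; exact x00_eq.
  - destruct i as [|[|i]]; [exact x01_eq|exact x11_eq|lia].
  - rewrite upper_columns_eq0 by lia; destruct i as [|[|i]]; reflexivity.
Qed.

End FixedPoint.

Lemma xstar_eq0 lam d i j : (2 <= i)%nat \/ (2 <= j)%nat -> xstar lam d i j = 0.
Proof. intros H; destruct i as [|[|i]], j as [|[|j]]; try lia; reflexivity. Qed.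

Lemma xstar_row lam d I i : (1 <= I)%nat ->
  row I (xstar lam d) i = if (i =? 0)%nat then 1 - lam else if (i =? 1)%nat then lam else 0.
Proof.
  intros HI; unfold row; destruct i as [|[|i]].
  - rewrite sumN_first_two by (try lia; intros; decide_nat_tests; apply xstar_eq0; lia).
    simpl; ring.
  - rewrite sumN_first_two by (try lia; intros; decide_nat_tests; apply xstar_eq0; lia).
    simpl; ring.
  - apply sumN_eq0; intros j _; rewrite xstar_eq0 by lia; destruct (_ <=? j)%nat; reflexivity.
Qed.

Section Existence.

Variables (lam : R) (d I : nat).

Hypothesis lam_pos : 0 < lam.
Hypothesis d_pos : (0 < d)%nat.
Hypothesis I_gt1 : (1 < I)%nat.
Hypothesis lam_lt : lam < 1 - 1 / INR d.

Lemma xstar_00_pos : 0 < xstar lam d 0%nat 0%nat.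
Proof. simpl; lra. Qed.

Lemma xstar_nonneg : nonneg I (xstar lam d).
Proof.
  intros i j _; assert (0 < 1 / INR d) by (apply Rdiv_lt_0_compat; [lra|apply lt_0_INR; lia]).
  destruct i as [|[|i]], j as [|[|j]]; simpl; lra.
Qed.

Lemma xstar_is_fixed_point : is_fixed_point lam d I (xstar lam d).
Proof.
  assert (INR d <> 0) by (apply not_0_INR; lia).
  split; [split|].
  - exact xstar_nonneg.
  - change (sumN (S I) (row I (xstar lam d)) = 1).
    rewrite sumN_first_two, !xstar_row
      by (try lia; intros; rewrite xstar_row by lia; decide_nat_tests; reflexivity).
    simpl; ring.
  - intros i j Hij.
    rewrite (drift_linear lam d I _ xstar_nonneg xstar_00_pos) by exact Hij.
    unfold linear_drift; rewrite !xstar_row by lia.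
    destruct (Nat.le_gt_cases 2 i) as [Hi|Hi].
    + decide_nat_tests; rewrite !xstar_eq0 by lia.
      destruct (i <? j)%nat, (i =? I)%nat; ring.
    + destruct i as [|[|i]], j as [|[|j]]; try lia; decide_nat_tests;
        rewrite ?xstar_eq0 by lia; simpl; field; assumption.
Qed.

End Existence.

Theorem mainTheorem6 (lam : R) (d I : nat) :
  0 < lam < 1 -> (2 <= d)%nat -> (1 < I)%nat ->
  lam < 1 - 1 / INR d ->
  is_fixed_point lam d I (xstar lam d) /\
  (forall x : config, is_fixed_point lam d I x ->
     forall i j, (i <= j <= I)%nat -> x i j = xstar lam d i j) /\
  xstar lam d 0%nat 0%nat > 0.
Proof.
  intros [Hlam _] Hd HI Hlt.
  split; [|split].
  - apply xstar_is_fixed_point; auto; lia.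
  - intros x Hfixed; apply fixed_point_eq_xstar; auto; lia.
  - apply xstar_00_pos; auto; lia.
Qed.
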